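(* Assume the setting in the context, with a decomposition of $\mathcal X$ over $A$, $g\in\mathcal G_s$ and an integer $T>0$. Let $\mathcal V$ be any subspace of $\mathcal U$ with $\mathcal U=\big(\bigoplus_{i\in\mathcal I}\mathcal E_i\big)\oplus\mathcal V$. If $\{(A,B|_{\mathcal E_i},g,T)\}_{i\in\mathcal I}$ is a decomposition (Definition 1) of $(A,B,g,T)$, then $A(\mathcal X)\cap B(\mathcal V)=\{0\}$.
   Context: Let $\mathcal F$ be a field and $\mathcal X,\mathcal U$ finite-dimensional vector spaces over $\mathcal F$. Let $A:\mathcal X\to\mathcal X$ and $B:\mathcal U\to\mathcal X$ be linear maps with $B$ injective, and consider $x_{t+1}=Ax_t+Bu_t$ and a cost $g:\mathcal X\to\mathbb R_{\ge0}$ with $g(x)=0\iff x=0$. Standing assumption: all minima appearing below are attained. Finite-horizon problem $(A,B,g,T)$: policies $\pi(x_0)=(\pi_t(x_0))_{t=0}^{T-1}\in\mathcal U^T$, cost $J(x_0,\pi)=\sum_{t=0}^Tg(x_t)$ with $x_{t+1}=Ax_t+B\pi_t(x_0)$; $J^*(x_0)=\min_\pi J(x_0,\pi)$; minimizing policies are optimal. A decomposition of $\mathcal X$ over $A$ is a direct sum $\mathcal X=\mathcal X_1\oplus\cdots\oplus\mathcal X_r$ with $r>1$ and $A\mathcal X_i\subseteq\mathcal X_i$, $i\in\mathcal I=\{1,\dots,r\}$; $\rho_i:\mathcal X\to\mathcal X_i$ is the projection along the other summands. $\mathcal G_s$ is the set of $h:\mathcal X\to\mathbb R_{\ge0}$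 with $h(x)=\sum_i h(\rho_i(x))$ for all $x$. $\mathcal E_i=\{u\in\mathcal U:Bu\in\mathcal X_i\}$ (the sum of the $\mathcal E_i$ is direct since $B$ is injective). Subproblem $(A,B|_{\mathcal E_i},g,T)$: same problem for $x_{i,t+1}=Ax_{i,t}+B\bar u_{i,t}$ with states in $\mathcal X_i$ and inputs in $\mathcal E_i$; optimal cost $\bar J_i^*$, optimal policies $\bar\pi_i^*$. Definition 1: the family is a decomposition of $(A,B,g,T)$ if for every $x$: $J^*(x)=\sum_i\bar J_i^*(\rho_i(x))$, and for every choice of optimal policies $\bar\pi_i^*(\rho_i(x))$ there is an optimal policy $\pi^*(x)$ with $\pi^*(x)=\sum_i\bar\pi_i^*(\rho_i(x))$. *)

From HB Require Import structures.
From mathcomp Require Import all_boot all_order all_algebra.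
Set Implicit Arguments. Unset Strict Implicit. Unset Printing Implicit Defensive.
Import Order.TTheory GRing.Theory Num.Theory.
Local Open Scope ring_scope.

Section Control.
Variables (F : fieldType) (X U : vectType F) (R : realFieldType).
Variables (A : 'End(X)) (B : 'Hom(U, X)) (g : X -> R) (T : nat).

Fixpoint traj (x0 : X) (u : nat -> U) (t : nat) : X :=
  match t with
  | 0 => x0
  | t'.+1 => A (traj x0 u t') + B (u t')
  end.

(* J(x0, u) = sum_{t=0}^T g(x_t); only u_0 .. u_{T-1} matter *)
Definition cost (x0 : X) (u : nat -> U) : R :=
  \sum_(t < T.+1) g (traj x0 u t).

Definition optimal (x0 : X) (u : nat -> U) : Prop :=
  forall u' : nat -> U, cost x0 u <= cost x0 u'.

Definition sub_optimal (E : {vspace U}) (x0 : X) (u : nat -> U) : Prop :=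
  (forall t, (t < T)%N -> u t \in E) /\
  forall u' : nat -> U, (forall t, (t < T)%N -> u' t \in E) ->
    cost x0 u <= cost x0 u'.

End Control.

Definition Einp (F : fieldType) (X U : vectType F) (B : 'Hom(U, X))
  (Xi : {vspace X}) : {vspace U} := (B @^-1: Xi)%VS.

(* J*(x) = sum_i Jbar_i*(rho_i x)   (values of minima, attained),
   and every family of subproblem-optimal inputs sums to an optimal input. *)
Definition is_problem_decomposition (F : fieldType) (X U : vectType F)
  (R : realFieldType) (A : 'End(X)) (B : 'Hom(U, X)) (g : X -> R) (T : nat)
  (r : nat) (Xs : 'I_r -> {vspace X}) (rho : 'I_r -> X -> X) : Prop :=
  forall x : X,
    (forall u : nat -> U, optimal A B g T x u ->
      forall us : 'I_r -> nat -> U,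
        (forall i, sub_optimal A B g T (Einp B (Xs i)) (rho i x) (us i)) ->
        cost A B g T x u = \sum_(i < r) cost A B g T (rho i x) (us i))
    /\
    (forall us : 'I_r -> nat -> U,
        (forall i, sub_optimal A B g T (Einp B (Xs i)) (rho i x) (us i)) ->
        optimal A B g T x (fun t => \sum_(i < r) us i t)).

From HB Require Import structures.
From mathcomp Require Import all_boot all_order all_algebra.
From mathcomp Require Import zify.
Set Implicit Arguments. Unset Strict Implicit. Unset Printing Implicit Defensive.
Import Order.TTheory GRing.Theory Num.Theory.
Local Open Scope ring_scope.

(* Let y = A x0 = B v with v in V.  The input "-v, then nothing" steers x0 to 0
   in one step, so its cost g x0 is optimal.  Definition 1 splits this cost as
   the sum of the subproblem costs, each of which is at least
   g (rho_i x0) + g (A rho_i x0 + B u_i0); since g is separable, all the second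
   terms vanish, i.e. A x0 = - B (sum_i u_i0).  Injectivity of B then puts v in
   (+)_i E_i, which meets V only in 0. *)

Lemma capv_sum_eq0_dim (K : fieldType) (vT : vectType K) (I : finType)
  (Es : I -> {vspace vT}) (V : {vspace vT}) :
  \dim (\sum_i Es i + V)%VS = (\sum_i \dim (Es i) + \dim V)%N ->
  ((\sum_i Es i) :&: V)%VS = 0%VS.
Proof.
move=> dim_sum; apply/eqP; rewrite -dimv_eq0; apply/eqP.
have := dimv_sum_cap (\sum_i Es i)%VS V.
have : (\dim (\sum_i Es i) <= \sum_i \dim (Es i))%N := dimv_leq_sum _ _ _.
lia.
Qed.

Definition impulse {U : nmodType} (u0 : U) : nat -> U :=
  fun t => if t == 0%N then u0 else 0.

Section Cost.
Variables (F : fieldType) (X U : vectType F) (R : realFieldType).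
Variables (A : 'End(X)) (B : 'Hom(U, X)) (g : X -> R) (T : nat).
Hypothesis g_ge0 : forall x, 0 <= g x.

Lemma traj_impulse_eq0 x0 u0 t :
  A x0 + B u0 = 0 -> (0 < t)%N -> traj A B x0 (impulse u0) t = 0.
Proof.
move=> steer; elim: t => // [[|t]] IH _; first by rewrite /= /impulse.
change (A (traj A B x0 (impulse u0) t.+1) + B (impulse u0 t.+1) = 0).
by rewrite IH // /impulse /= !linear0 addr0.
Qed.

Lemma cost_ge_head x u : g x <= cost A B g T x u.
Proof. by rewrite /cost big_ord_recl lerDl sumr_ge0. Qed.

Lemma cost_ge_first_steps x u :
  (0 < T)%N -> g x + g (traj A B x u 1) <= cost A B g T x u.
Proof.
case: T => // T' _.
by rewrite /cost !big_ord_recl /= addrA lerDl sumr_ge0.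
Qed.

Lemma cost_impulse x0 u0 :
  g 0 = 0 -> A x0 + B u0 = 0 -> cost A B g T x0 (impulse u0) = g x0.
Proof.
move=> g00 steer; rewrite /cost big_ord_recl big1 ?addr0 // => t _.
by rewrite traj_impulse_eq0 ?g00.
Qed.

Lemma optimal_impulse x0 u0 :
  g 0 = 0 -> A x0 + B u0 = 0 -> optimal A B g T x0 (impulse u0).
Proof. by move=> g00 steer u'; rewrite cost_impulse // cost_ge_head. Qed.

Lemma split_cost_first_steps_eq0 (r : nat) (rho : 'I_r -> X -> X) x u
  (us : 'I_r -> nat -> U) :
  (0 < T)%N -> (forall x, g x = 0 <-> x = 0) ->
  g x = \sum_(i < r) g (rho i x) ->
  cost A B g T x u = g x ->
  cost A B g T x u = \sum_(i < r) cost A B g T (rho i x) (us i) ->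
  forall i, A (rho i x) + B (us i 0%N) = 0.
Proof.
move=> T_gt0 g_eq0 g_sep cost_head cost_split.
pose excess i := cost A B g T (rho i x) (us i) - g (rho i x).
have step_le i : g (A (rho i x) + B (us i 0%N)) <= excess i.
  by rewrite lerBrDl cost_ge_first_steps.
have excess_sum0 : \sum_(i < r) excess i = 0.
  by rewrite sumrB -cost_split cost_head g_sep subrr.
have excess0 := psumr_eq0P (fun i _ => le_trans (g_ge0 _) (step_le i)) excess_sum0.
move=> i; apply/g_eq0/le_anti; rewrite g_ge0 andbT.
by rewrite -(excess0 i).
Qed.

End Cost.

Theorem proposition5 (F : fieldType) (X U : vectType F) (R : realFieldType)
  (A : 'End(X)) (B : 'Hom(U, X)) (g : X -> R) (T r : nat)
  (Xs : 'I_r -> {vspace X}) (rho : 'I_r -> X -> X) (V : {vspace U})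
  (HB : lker B = 0%VS)
  (Hr : (1 < r)%N)
  (Hdir : directv (\sum_(i < r) Xs i)%VS)
  (Hfull : (\sum_(i < r) Xs i)%VS = fullv)
  (Hinv : forall i, (A @: Xs i <= Xs i)%VS)
  (Hrho_in : forall i x, rho i x \in Xs i)
  (Hrho_sum : forall x, x = \sum_(i < r) rho i x)
  (Hg0 : forall x, 0 <= g x)
  (Hgz : forall x, g x = 0 <-> x = 0)
  (Hgs : forall x, g x = \sum_(i < r) g (rho i x))
  (HT : (0 < T)%N)
  (HVdir : \dim (\sum_(i < r) Einp B (Xs i) + V)%VS
            = (\sum_(i < r) \dim (Einp B (Xs i)) + \dim V)%N)
  (HVfull : (\sum_(i < r) Einp B (Xs i) + V)%VS = fullv)
  (Hatt : forall x, exists u, optimal A B g T x u)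
  (Hatt_sub : forall i x, x \in Xs i ->
     exists u, sub_optimal A B g T (Einp B (Xs i)) x u)
  (Hdec : is_problem_decomposition A B g T Xs rho) :
  (limg A :&: (B @: V))%VS = 0%VS.
Proof.
apply/eqP; rewrite -subv0; apply/subvP => y.
rewrite memv_cap memv0 => /andP[/memv_imgP[x0 _ ->] /memv_imgP[v Vv Bv]].
have steer : A x0 + B (- v) = 0 by rewrite linearN /= -Bv subrr.
have [us us_opt] := fin_all_exists (fun i => Hatt_sub i _ (Hrho_in i x0)).
have g00 : g 0 = 0 by apply/Hgz.
have opt := optimal_impulse T Hg0 g00 steer.
have first0 := split_cost_first_steps_eq0 Hg0 HT Hgz (Hgs x0)
  (cost_impulse T g00 steer) ((Hdec x0).1 _ opt us us_opt).
have v_sum : v = - \sum_(i < r) us i 0%N.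
  apply/(lker0P (introT eqP HB)); rewrite linearN linear_sum -Bv (Hrho_sum x0).
  rewrite linear_sum -sumrN; apply: eq_bigr => i _.
  by apply/eqP; rewrite -addr_eq0 first0.
have : v \in ((\sum_(i < r) Einp B (Xs i)) :&: V)%VS.
  rewrite memv_cap Vv andbT v_sum memvN; apply: memv_sumr => i _.
  exact: (us_opt i).1 0%N HT.
by rewrite capv_sum_eq0_dim // memv0 Bv => /eqP ->; rewrite linear0.
Qed.
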